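(* Let $(L_i)_{i\in I}$ be a family of lattices with zero, pairwise intersecting in $\{0\}$, and let $L=\coprod^0_{i\in I}L_i$ with each $L_i$ identified with its canonical copy in $L$. For each $i$, let $\varepsilon_i\colon\operatorname{Id}L_i\to\operatorname{Id}L$, $X\mapsto L\mathbin{\downarrow}X=\{y\in L:(\exists x\in X)(y\le x)\}$. Let $\mathbf{p}$ be a lattice term with variables from $I\times\omega$ and let $\vec X=(X_{i,n})_{(i,n)\in I\times\omega}\in\prod_{(i,n)\in I\times\omega}\operatorname{Id}L_i$, and put $\vec\varepsilon\vec X=(\varepsilon_i(X_{i,n}))_{(i,n)\in I\times\omega}\in(\operatorname{Id}L)^{I\times\omega}$. Then, evaluating $\mathbf{p}$ in $\operatorname{Id}L$, $$\mathbf{p}(\vec\varepsilon\vec X)=L\mathbin{\downarrow}\{\mathbf{p}(\vec x): \vec x=(x_{i,n}),\ x_{i,n}\in X_{i,n}\text{ for all }(i,n)\in I\times\omega\},$$ where $\mathbf{p}(\vec x)$ is evaluated in $L$.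
   Context: $\coprod^0$ denotes the coproduct in the category of lattices with zero and zero-preserving homomorphisms; $\omega$ is the set of natural numbers. $\operatorname{Id}K$ is the lattice of all ideals (nonempty lower subsets closed under finite joins) of a lattice $K$, ordered by inclusion. *)

From HB Require Import structures.
From mathcomp Require Import all_boot all_order.
Set Implicit Arguments. Unset Strict Implicit. Unset Printing Implicit Defensive.
Import Order.TTheory.
Local Open Scope order_scope.

Inductive lterm (V : Type) : Type :=
| LVar of V
| LJoin of lterm V & lterm V
| LMeet of lterm V & lterm V.

Fixpoint leval (V : Type) (d : Order.disp_t) (K : latticeType d)
  (v : V -> K) (t : lterm V) : K :=
  match t with
  | LVar x => v x
  | LJoin a b => leval v a `|` leval v b
  | LMeet a b => leval v a `&` leval v b
  end.

Definition is_ideal (d : Order.disp_t) (K : latticeType d) (A : K -> Prop) : Prop :=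
  (exists x, A x) /\
  (forall x y : K, y <= x -> A x -> A y) /\
  (forall x y : K, A x -> A y -> A (x `|` y)).

Definition id_meet (d : Order.disp_t) (K : latticeType d) (A B : K -> Prop) : K -> Prop :=
  fun z => A z /\ B z.

Definition id_join (d : Order.disp_t) (K : latticeType d) (A B : K -> Prop) : K -> Prop :=
  fun z => forall J : K -> Prop, is_ideal J ->
    (forall x, A x -> J x) -> (forall x, B x -> J x) -> J z.

Fixpoint ideval (V : Type) (d : Order.disp_t) (K : latticeType d)
  (v : V -> (K -> Prop)) (t : lterm V) : K -> Prop :=
  match t with
  | LVar x => v x
  | LJoin a b => id_join (ideval v a) (ideval v b)
  | LMeet a b => id_meet (ideval v a) (ideval v b)
  end.

Definition downset (d : Order.disp_t) (K : latticeType d) (S : K -> Prop) : K -> Prop :=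
  fun y => exists x, S x /\ y <= x.

Definition is_hom0 (d1 d2 : Order.disp_t) (K1 : bLatticeType d1) (K2 : bLatticeType d2)
  (f : K1 -> K2) : Prop :=
  f \bot = \bot /\
  (forall x y, f (x `|` y) = f x `|` f y) /\
  (forall x y, f (x `&` y) = f x `&` f y).

Definition is_coproduct0 (I : Type) (d : I -> Order.disp_t)
  (Li : forall i, bLatticeType (d i)) (dL : Order.disp_t) (L : bLatticeType dL)
  (e : forall i, Li i -> L) : Prop :=
  (forall i, is_hom0 (e i)) /\
  forall (dK : Order.disp_t) (K : bLatticeType dK) (f : forall i, Li i -> K),
    (forall i, is_hom0 (f i)) ->
    exists h : L -> K,
      [/\ is_hom0 h,
          (forall i x, h (e i x) = f i x) &
          (forall h' : L -> K, is_hom0 h' -> (forall i x, h' (e i x) = f i x) ->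
             forall y, h' y = h y)].

(* epsilon_i : Id L_i -> Id L, X |-> L ↓ X (X identified with its copy in L). *)
Definition eps (I : Type) (d : I -> Order.disp_t)
  (Li : forall i, bLatticeType (d i)) (dL : Order.disp_t) (L : bLatticeType dL)
  (e : forall i, Li i -> L) (i : I) (X : Li i -> Prop) : L -> Prop :=
  downset (fun y => exists2 x, X x & y = e i x).

From HB Require Import structures.
From mathcomp Require Import all_boot all_order.
From Stdlib Require Import ClassicalEpsilon FunctionalExtensionality PropExtensionality Eqdep.
Set Implicit Arguments. Unset Strict Implicit. Unset Printing Implicit Defensive.
Import Order.TTheory.
Local Open Scope order_scope.

(* The vectors x with x_{i,n} in X_{i,n} form an up-directed family (componentwise
   joins stay in the ideals), so the values p(x) in L form a directed set whose
   downset is an ideal.  For valuations ranging over such a directed family, meets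
   and joins in Id L commute with taking downsets of values: a join of two downsets
   is generated by the joins a \/ b, and a meet is generated by the meets a /\ b
   after passing to a common upper bound of the two vectors.  Induction on p then
   reduces everything to the variables, where L ↓ X_{i,n} is the downset of the
   (i,n)-coordinates of all admissible vectors. *)

Lemma pred_ext (T : Type) (A B : T -> Prop) : (forall x, A x <-> B x) -> A = B.
Proof.
by move=> AB; apply: functional_extensionality => x; apply: propositional_extensionality.
Qed.

Lemma ex_section (J : Type) (A : J -> Type) (P : forall j, A j -> Prop) :
  (forall j, exists a, P j a) -> exists f : forall j, A j, forall j, P j (f j).
Proof.
move=> P_ne; exists (fun j => proj1_sig (constructive_indefinite_description _ (P_ne j))).
by move=> j; exact: proj2_sig (constructive_indefinite_description _ (P_ne j)).
Qed.

Lemma ex_section_through (J : Type) (A : J -> Type) (P : forall j, A j -> Prop)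
  (j0 : J) (a0 : A j0) :
  (forall j, exists a, P j a) -> P j0 a0 ->
  exists f : forall j, A j, (forall j, P j (f j)) /\ f j0 = a0.
Proof.
move=> P_ne Pa0.
have Q_ne j : exists a, P j a /\ forall E : j0 = j, a = eq_rect j0 A a0 j E.
  case: (classic (j0 = j)) => [<- | nj].
    by exists a0; split=> // E; rewrite -eq_rect_eq.
  by have [a Pa] := P_ne j; exists a; split=> // E; case: nj.
have [f Pf] := ex_section Q_ne.
exists f; split=> [j | ]; first by case: (Pf j).
by case: (Pf j0) => _ ->; rewrite -eq_rect_eq.
Qed.

Lemma hom0_homo (d1 d2 : Order.disp_t) (K1 : bLatticeType d1) (K2 : bLatticeType d2)
  (f : K1 -> K2) : is_hom0 f -> {homo f : x y / x <= y}.
Proof. by move=> [_ [fU _]] x y /join_idPr <-; rewrite fU leUl. Qed.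

Lemma leval_homo (V : Type) (d : Order.disp_t) (K : latticeType d) (w w' : V -> K) :
  (forall v, w v <= w' v) -> forall t, leval w t <= leval w' t.
Proof.
by move=> ww'; elim=> [v | a IHa b IHb | a IHa b IHb] /=;
  [exact: ww' | exact: leU2 | exact: leI2].
Qed.

Lemma downset_is_ideal (d : Order.disp_t) (K : latticeType d) (S : K -> Prop) :
  (exists x, S x) -> (forall x y, S x -> S y -> exists2 z, S z & x `|` y <= z) ->
  is_ideal (downset S).
Proof.
move=> [x Sx] S_dir; split; last split.
- by exists x, x.
- by move=> a b ba [c [Sc ac]]; exists c; split=> //; exact: le_trans ba ac.
- move=> a b [c [Sc ac]] [c' [Sc' bc']].
  have [z Sz cc'z] := S_dir c c' Sc Sc'.
  by exists z; split=> //; exact: le_trans (leU2 ac bc') cc'z.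
Qed.

Lemma id_join_le_join (d : Order.disp_t) (K : latticeType d) (A B : K -> Prop) a b z :
  A a -> B b -> z <= a `|` b -> id_join A B z.
Proof. by move=> Aa Bb zab J [_ [J_down J_join]] AJ BJ; apply: J_down zab _; auto. Qed.

Section DirectedValuations.

Variables (d : Order.disp_t) (K : latticeType d) (V C : Type).
Variables (ok : C -> Prop) (asg : C -> V -> K).

Hypothesis ok_ex : exists c, ok c.
Hypothesis ok_directed : forall c1 c2, ok c1 -> ok c2 ->
  exists c, [/\ ok c, forall v, asg c1 v <= asg c v & forall v, asg c2 v <= asg c v].

Definition value_ideal (t : lterm V) : K -> Prop :=
  downset (fun y => exists c, ok c /\ y = leval (asg c) t).

Lemma value_ideal_leval c t : ok c -> value_ideal t (leval (asg c) t).
Proof. by move=> okc; exists (leval (asg c) t); split=> //; exists c. Qed.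

Lemma value_ideal_is_ideal t : is_ideal (value_ideal t).
Proof.
apply: downset_is_ideal.
  by have [c okc] := ok_ex; exists (leval (asg c) t), c.
move=> _ _ [c1 [ok1 ->]] [c2 [ok2 ->]].
have [c [okc le1 le2]] := ok_directed ok1 ok2.
by exists (leval (asg c) t); [exists c | rewrite leUx !leval_homo].
Qed.

Lemma id_join_value_ideal a b :
  id_join (value_ideal a) (value_ideal b) = value_ideal (LJoin a b).
Proof.
apply: pred_ext => z; split.
- move=> Hz; apply: Hz; first exact: value_ideal_is_ideal.
  + move=> y [_ [[c [okc ->]] yc]]; exists (leval (asg c) (LJoin a b)).
    by split; [exists c | exact: le_trans yc (leUl _ _)].
  + move=> y [_ [[c [okc ->]] yc]]; exists (leval (asg c) (LJoin a b)).
    by split; [exists c | exact: le_trans yc (leUr _ _)].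
- move=> [_ [[c [okc ->]] zc]].
  by apply: id_join_le_join zc; exact: value_ideal_leval.
Qed.

Lemma id_meet_value_ideal a b :
  id_meet (value_ideal a) (value_ideal b) = value_ideal (LMeet a b).
Proof.
apply: pred_ext => z; split.
- move=> [[_ [[c1 [ok1 ->]] zc1]] [_ [[c2 [ok2 ->]] zc2]]].
  have [c [okc le1 le2]] := ok_directed ok1 ok2.
  exists (leval (asg c) (LMeet a b)); split; first by exists c.
  rewrite /= lexI (le_trans zc1 (leval_homo le1 a)).
  exact: le_trans zc2 (leval_homo le2 b).
- move=> [_ [[c [okc ->]] zc]]; split.
  + by exists (leval (asg c) a); split; [exists c | exact: le_trans zc (leIl _ _)].
  + by exists (leval (asg c) b); split; [exists c | exact: le_trans zc (leIr _ _)].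
Qed.

Lemma ideval_value_ideal t :
  ideval (fun v => value_ideal (LVar v)) t = value_ideal t.
Proof.
elim: t => [v | a IHa b IHb | a IHa b IHb] //=; rewrite IHa IHb.
- exact: id_join_value_ideal.
- exact: id_meet_value_ideal.
Qed.

End DirectedValuations.

Lemma eps_downset_sections (I : Type) (d : I -> Order.disp_t)
  (Li : forall i, bLatticeType (d i)) (dL : Order.disp_t) (L : bLatticeType dL)
  (e : forall i, Li i -> L) (X : forall i : I, nat -> Li i -> Prop)
  (X_ne : forall i n, exists a, X i n a) i n :
  eps e (X i n) = downset (fun y : L => exists x : forall i : I, nat -> Li i,
                    (forall j m, X j m (x j m)) /\ y = e i (x i n)).
Proof.
congr downset; apply: pred_ext => y; split.
- move=> [a Xa ->].
  have [f [Xf f_in]] := @ex_section_through (I * nat) (fun v => Li v.1)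
    (fun v => X v.1 v.2) (i, n) a (fun v => X_ne v.1 v.2) Xa.
  by exists (fun j m => f (j, m)); split=> [j m | ]; [exact: Xf (j, m) | rewrite f_in].
- by move=> [x [Xx ->]]; exists (x i n).
Qed.

Theorem lemma5p1 (I : Type) (d : I -> Order.disp_t)
  (Li : forall i, bLatticeType (d i)) (dL : Order.disp_t) (L : bLatticeType dL)
  (e : forall i, Li i -> L) (He : @is_coproduct0 I d Li dL L e)
  (p : lterm (I * nat)) (X : forall i : I, nat -> Li i -> Prop)
  (HX : forall i n, is_ideal (X i n)) :
  ideval (fun v : I * nat => eps e (X v.1 v.2)) p =
  downset (fun y : L => exists x : forall i : I, nat -> Li i,
             (forall i n, X i n (x i n)) /\
             y = leval (fun v : I * nat => e v.1 (x v.1 v.2)) p).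
Proof.
pose ok (x : forall i : I, nat -> Li i) := forall i n, X i n (x i n).
pose asg (x : forall i : I, nat -> Li i) (v : I * nat) := e v.1 (x v.1 v.2).
have X_ne i n : exists a, X i n a := (HX i n).1.
have ok_ex : exists x, ok x.
  have [f Xf] := @ex_section (I * nat) (fun v => Li v.1) (fun v => X v.1 v.2)
    (fun v => X_ne v.1 v.2).
  by exists (fun i n => f (i, n)) => i n; exact: Xf (i, n).
have ok_directed x1 x2 : ok x1 -> ok x2 ->
    exists x, [/\ ok x, forall v, asg x1 v <= asg x v & forall v, asg x2 v <= asg x v].
  move=> ok1 ok2; exists (fun i n => x1 i n `|` x2 i n); split.
  - by move=> i n; apply: (HX i n).2.2.
  - by move=> v; apply: hom0_homo (He.1 v.1) _ _ (leUl _ _).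
  - by move=> v; apply: hom0_homo (He.1 v.1) _ _ (leUr _ _).
transitivity (ideval (fun v => value_ideal ok asg (LVar v)) p);
  last exact: ideval_value_ideal.
by congr ideval; apply: functional_extensionality => -[i n]; exact: eps_downset_sections.
Qed.
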